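(* Consider the following model. Fix $n\ge1$, $\mu\in\mathbb R^n$, $n\times n$ matrices $A,B,C$, a positive definite $\Sigma_0$ and positive initial prices. Let $$R_{t+1}=\mu+Z_{t+1},\qquad \Sigma_{t+1}=CC^\top+A\Sigma_tA^\top+BZ_{t+1}Z_{t+1}^\top B^\top,$$ where conditionally on the past $Z_{t+1}$ has mean $0$ and covariance $\Sigma_t$; prices $S^i_{t+1}=h(S^i_t,R^i_{t+1})$, $\vec S_t=(S^1_t,\dots,S^n_t)^\top$, $\Psi_t=\mathrm{diag}(\vec S_t)$, $P_t=\Psi_t\Sigma_t\Psi_t$. Let $\gamma>0$, $\epsilon>0$, $q:\mathbb R^n\times\mathbb R^{n\times n}\to\mathbb R^+$, and $\widetilde P_t=\frac{\gamma}{\epsilon q(\vec S_t,P_t)}P_t$. Assume: (i) $C$ has full rank, so $c:=\inf_{\|v\|=1}v^\top CC^\top v>0$; (ii) $\|h\|_\infty=\sup_{s,r}|h(s,r)|<\infty$ and there is $\underline s>0$ with $\inf_{s,r}h(s,r)\ge\underline s$; (iii) there is $\chi<\infty$ with $1\le q(s,p)\le\chi$ for all $(s,p)$. Then for all $t$, $$\left\|\frac{1}{\epsilon q(\vec S_t,P_t)}\Psi_t^{-1}\right\|\le\frac{1}{\epsilon\underline s},\qquad \left\|\left(I+\widetilde P_t\Psi_t^{-1}\right)^{-1}P_t\right\|\le\frac{\epsilon}{\gamma}\chi\|h\|_\infty.$$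
   Context: $\|\cdot\|$ denotes the operator norm induced by the Euclidean norm. $\mathrm{diag}(\vec S_t)$ is the diagonal matrix with the entries of $\vec S_t$ on its diagonal. *)

From HB Require Import structures.
From mathcomp Require Import all_boot all_order all_algebra.
From mathcomp Require Import classical_sets reals.
Set Implicit Arguments. Unset Strict Implicit. Unset Printing Implicit Defensive.
Import Order.TTheory GRing.Theory Num.Theory.
Local Open Scope ring_scope.
Local Open Scope classical_set_scope.

Definition eucl_norm (R : realType) (n : nat) (v : 'cV[R]_n) : R :=
  Num.sqrt (\sum_(i < n) (v i 0) ^+ 2).

Definition opnorm (R : realType) (n : nat) (M : 'M[R]_n) : R :=
  sup [set eucl_norm (M *m v) | v in [set v : 'cV[R]_n | eucl_norm v = 1]].

Definition diag_cV (R : realType) (n : nat) (S : 'cV[R]_n) : 'M[R]_n :=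
  diag_mx S^T.

Definition supnorm2 (R : realType) (h : R -> R -> R) : R :=
  sup (range (fun p : R * R => `|h p.1 p.2|)).

(** Write [E = I + k P Psi^-1] with [k = gamma / (eps q)].  The vector
    [w = E^-1 P v] satisfies [w = P (v - k Psi^-1 w)], and [P = Psi Sigma Psi]
    is positive semidefinite (the recursion for [Sigma] preserves this), so
    pairing with [v - k Psi^-1 w] gives [k w^T Psi^-1 w <= v^T w]; the same
    inequality with [v = 0] shows that [E] is invertible.  The prices are at
    most [||h||_oo], hence [|w|^2 <= (||h||_oo / k) v^T w] and, by AM-GM,
    [|w| <= (||h||_oo / k) |v|]; [q <= chi] then gives the second bound.  The
    first bound only uses [Psi >= s_low] and [q >= 1]. *)
From HB Require Import structures.
From mathcomp Require Import all_boot all_order all_algebra.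
From mathcomp Require Import classical_sets reals.
From mathcomp Require Import lra ring.
Import Order.TTheory GRing.Theory Num.Theory.
Local Open Scope ring_scope.
Local Open Scope classical_set_scope.

Section OperatorNorm.
Variables (R : realType) (n : nat).

Lemma eucl_norm_le (v : 'cV[R]_n) (b : R) :
  0 <= b -> \sum_i v i 0 ^+ 2 <= b ^+ 2 -> eucl_norm v <= b.
Proof.
move=> b_ge0 le_vb; rewrite /eucl_norm.
by apply: le_trans (ler_wsqrtr le_vb) _; rewrite sqrtr_sqr ger0_norm.
Qed.

Lemma sum_sqr_eucl_norm1 (v : 'cV[R]_n) :
  eucl_norm v = 1 -> \sum_i v i 0 ^+ 2 = 1.
Proof.
rewrite /eucl_norm => v1.
have sum_ge0 : 0 <= \sum_i v i 0 ^+ 2 by apply: sumr_ge0 => i _; exact: sqr_ge0.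
by rewrite -(sqr_sqrtr sum_ge0) v1 expr1n.
Qed.

Lemma opnorm_le (M : 'M[R]_n) (b : R) : (0 < n)%N -> 0 <= b ->
  (forall v : 'cV[R]_n, \sum_i (M *m v) i 0 ^+ 2 <= b ^+ 2 * \sum_i v i 0 ^+ 2) ->
  opnorm M <= b.
Proof.
move=> n_gt0 b_ge0 leMb; apply: ge_sup => [|_ [v /= v1 <-]].
  pose e := \col_i ((i == Ordinal n_gt0)%:R : R).
  exists (eucl_norm (M *m e)), e => //=.
  rewrite /eucl_norm (bigD1 (Ordinal n_gt0)) //= big1 => [|i /negbTE ni].
    by rewrite !mxE eqxx expr1n addr0 sqrtr1.
  by rewrite !mxE ni expr0n.
apply: eucl_norm_le => //; apply: le_trans (leMb v) _.
by rewrite sum_sqr_eucl_norm1 // mulr1.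
Qed.

Lemma sum_sqr_le_of_le_dot (v w : 'cV[R]_n) (a : R) : 0 <= a ->
  \sum_i w i 0 ^+ 2 <= a * \sum_i v i 0 * w i 0 ->
  \sum_i w i 0 ^+ 2 <= a ^+ 2 * \sum_i v i 0 ^+ 2.
Proof.
move=> a_ge0 le_w_vw.
have amgm : 2 * (a * \sum_i v i 0 * w i 0)
            <= \sum_i w i 0 ^+ 2 + a ^+ 2 * \sum_i v i 0 ^+ 2.
  rewrite mulrA !mulr_sumr -big_split /=; apply: ler_sum => i _.
  have := sqr_ge0 (w i 0 - a * v i 0); nra.
lra.
Qed.

End OperatorNorm.

Section Invertibility.
Variables (R : realType) (n : nat).

Lemma unitmx_ker0 (M : 'M[R]_n) :
  (forall x : 'cV[R]_n, M *m x = 0 -> x = 0) -> M \in unitmx.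
Proof.
move=> ker0; rewrite -unitmx_tr -row_free_unit -kermx_eq0.
apply/eqP/row_matrixP => i; rewrite row0.
have Mr0 : M *m (row i (kermx M^T))^T = 0.
  by apply: trmx_inj; rewrite trmx_mul trmxK -row_mul mulmx_ker row0 !trmx0.
by rewrite -[row i _]trmxK (ker0 _ Mr0) trmx0.
Qed.

Lemma diag_cV_unit (s : 'cV[R]_n) :
  (forall i, s i 0 != 0) -> diag_cV s \in unitmx.
Proof.
move=> s_neq0; rewrite unitmxE det_diag unitfE.
by apply/prodf_neq0 => i _; rewrite mxE.
Qed.

Lemma invmx_diag_cVE (s w : 'cV[R]_n) i :
  (forall i, s i 0 != 0) -> (invmx (diag_cV s) *m w) i 0 = w i 0 / s i 0.
Proof.
move=> s_neq0.
have := congr1 (fun M : 'cV[R]_n => M i 0)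
  (mulKVmx (diag_cV_unit _ s_neq0) w).
rewrite /diag_cV mul_diag_mx !mxE => <-.
by field.
Qed.

End Invertibility.

Section PositiveSemidefinite.
Variable R : realType.

Definition psd {n} (M : 'M[R]_n) := forall x : 'cV[R]_n, 0 <= (x^T *m M *m x) 0 0.

Lemma pd_psd {n} (M : 'M[R]_n) :
  (forall x : 'cV[R]_n, x != 0 -> 0 < (x^T *m M *m x) 0 0) -> psd M.
Proof.
move=> pdM x; case: (eqVneq x 0) => [->|/pdM/ltW //].
by rewrite mulmx0 mxE.
Qed.

Lemma psd_add {n} (M N : 'M[R]_n) : psd M -> psd N -> psd (M + N).
Proof. by move=> psdM psdN x; rewrite mulmxDr mulmxDl mxE addr_ge0. Qed.

Lemma psd_congr {n m} (M : 'M[R]_m) (A : 'M[R]_(n, m)) :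
  psd M -> psd (A *m M *m A^T).
Proof.
move=> psdM x; have := psdM (A^T *m x).
by rewrite trmx_mul trmxK !mulmxA.
Qed.

Lemma psd1 {n} : psd (1%:M : 'M[R]_n).
Proof.
move=> x; rewrite mulmx1 mxE; apply: sumr_ge0 => i _.
by rewrite mxE -expr2 sqr_ge0.
Qed.

Lemma psd_gram {n m} (A : 'M[R]_(n, m)) : psd (A *m A^T).
Proof. by have := psd_congr _ A psd1; rewrite mulmx1. Qed.

Lemma covariance_psd {n} (A B C : 'M[R]_n) (Z : nat -> 'cV[R]_n)
    (Sig : nat -> 'M[R]_n) :
  psd (Sig 0%N) ->
  (forall t, Sig t.+1 = C *m C^T + A *m Sig t *m A^T
                         + B *m Z t.+1 *m (Z t.+1)^T *m B^T) ->
  forall t, psd (Sig t).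
Proof.
move=> psd0 SigS; elim=> // t IH; rewrite SigS.
apply: psd_add; first by apply: psd_add; [exact: psd_gram | exact: psd_congr].
by rewrite -!mulmxA -trmx_mul mulmxA; apply: psd_gram.
Qed.

End PositiveSemidefinite.

Arguments psd {R n}.

Section Resolvent.
Variables (R : realType) (n : nat) (P : 'M[R]_n) (s : 'cV[R]_n) (k : R).
Hypotheses (psdP : psd P) (s_gt0 : forall i, 0 < s i 0).

Let s_neq0 i : s i 0 != 0. Proof. by rewrite gt_eqF. Qed.

Let E := 1%:M + (k *: P) *m invmx (diag_cV s).

Lemma resolvent_dissipation (v w : 'cV[R]_n) :
  E *m w = P *m v -> k * \sum_i w i 0 ^+ 2 / s i 0 <= \sum_i v i 0 * w i 0.
Proof.
rewrite /E mulmxDl mul1mx -mulmxA -scalemxAl => Ew.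
set u := invmx (diag_cV s) *m w in Ew.
have w_eq : w = P *m (v - k *: u) by rewrite mulmxBr -scalemxAr -Ew addrK.
have uE i : u i 0 = w i 0 / s i 0 by exact: invmx_diag_cVE.
clearbody u.
rewrite -subr_ge0.
have -> : \sum_i v i 0 * w i 0 - k * \sum_i w i 0 ^+ 2 / s i 0
          = ((v - k *: u)^T *m w) 0 0.
  rewrite mxE mulr_sumr -sumrB; apply: eq_bigr => i _.
  by rewrite !mxE uE; ring.
by rewrite w_eq mulmxA psdP.
Qed.

Lemma resolvent_unit : 0 < k -> E \in unitmx.
Proof.
move=> k_gt0; apply: unitmx_ker0 => w Ew0.
have := @resolvent_dissipation 0 w; rewrite mulmx0 => /(_ Ew0).
rewrite [X in _ <= X]big1 => [|i _]; last by rewrite mxE mul0r.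
rewrite pmulr_rle0 // => sum_le0.
have terms_ge0 i : true -> 0 <= w i 0 ^+ 2 / s i 0.
  by move=> _; rewrite divr_ge0 ?sqr_ge0 ?ltW.
have /psumr_eq0P term0 : \sum_i w i 0 ^+ 2 / s i 0 = 0.
  by apply/le_anti; rewrite sum_le0 sumr_ge0.
apply/colP => i; move/eqP: (term0 terms_ge0 i isT).
by rewrite mulf_eq0 invr_eq0 (negbTE (s_neq0 i)) orbF sqrf_eq0 mxE => /eqP.
Qed.

Lemma opnorm_resolvent_le (H : R) : (0 < n)%N -> 0 < k ->
  (forall i, s i 0 <= H) -> opnorm (invmx E *m P) <= H / k.
Proof.
move=> n_gt0 k_gt0 s_leH.
have H_gt0 : 0 < H by apply: lt_le_trans (s_gt0 (Ordinal n_gt0)) _.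
apply: opnorm_le; rewrite ?divr_ge0 ?ltW // => v.
set w := invmx E *m P *m v.
have Ew : E *m w = P *m v by rewrite /w -!mulmxA mulKVmx ?resolvent_unit.
apply: sum_sqr_le_of_le_dot; first by rewrite divr_ge0 ?ltW.
apply: le_trans (ler_wpM2l _ (resolvent_dissipation _ _ Ew)); last first.
  by rewrite divr_ge0 ?ltW.
rewrite mulrA divfK ?gt_eqF // mulr_sumr ler_sum // => i _.
by rewrite mulrCA ler_peMr ?sqr_ge0 // ler_pdivlMr // mul1r.
Qed.

End Resolvent.

Arguments opnorm_resolvent_le {R n P s k}.

Lemma opnorm_scale_invmx_diag_le {R : realType} {n} (s : 'cV[R]_n) (c lo : R) :
  (0 < n)%N -> 0 <= c -> 0 < lo -> (forall i, lo <= s i 0) ->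
  opnorm (c *: invmx (diag_cV s)) <= c / lo.
Proof.
move=> n_gt0 c_ge0 lo_gt0 lo_le_s.
have s_gt0 i : 0 < s i 0 by apply: lt_le_trans (lo_le_s i).
have s_neq0 i : s i 0 != 0 by rewrite gt_eqF.
have lo_ge0 := ltW lo_gt0.
apply: opnorm_le; rewrite ?divr_ge0 // => v.
rewrite mulr_sumr ler_sum // => i _.
rewrite -scalemxAl mxE invmx_diag_cVE // mulrCA mulrC exprMn.
rewrite ler_wpM2r ?sqr_ge0 // ler_sqr ?nnegrE ?divr_ge0 ?(ltW (s_gt0 i)) //.
by rewrite ler_wpM2l // lef_pV2 ?posrE.
Qed.

Lemma abs_le_supnorm2 {R : realType} {h : R -> R -> R} s r :
  has_ubound (range (fun p : R * R => `|h p.1 p.2|)) ->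
  `|h s r| <= supnorm2 h.
Proof. by move=> h_bd; apply: (ub_le_sup h_bd); exists (s, r). Qed.

Lemma price_bounds {R : realType} {n} {h : R -> R -> R} {s_low : R}
    {Ret Sp : nat -> 'cV[R]_n} {t} :
  has_ubound (range (fun p : R * R => `|h p.1 p.2|)) ->
  (forall s r, s_low <= h s r) ->
  (forall t i, Sp t.+1 i 0 = h (Sp t i 0) (Ret t.+1 i 0)) ->
  (0 < t)%N \/ (forall i, s_low <= Sp 0%N i 0 <= supnorm2 h) ->
  forall i, s_low <= Sp t i 0 <= supnorm2 h.
Proof.
move=> h_bd h_ge SpS; case: t => [[//|//]|t] _ i.
by rewrite SpS h_ge (le_trans (ler_norm _)) ?abs_le_supnorm2.
Qed.

Theorem lemma2 (R : realType) (n : nat) (n_ge1 : (1 <= n)%N)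
  (mu : 'cV[R]_n) (A B C Sig0 : 'M[R]_n) (S0 : 'cV[R]_n)
  (h : R -> R -> R) (q : 'cV[R]_n -> 'M[R]_n -> R)
  (gamma eps s_low chi : R)
  (Z : nat -> 'cV[R]_n) (Ret : nat -> 'cV[R]_n)
  (Sig : nat -> 'M[R]_n) (Sp : nat -> 'cV[R]_n) :
  (* Sigma_0 positive definite *)
  Sig0^T = Sig0 ->
  (forall v : 'cV[R]_n, v != 0 -> 0 < (v^T *m Sig0 *m v) 0 0) ->
  (* positive initial prices *)
  (forall i, 0 < S0 i 0) ->
  (* dynamics (along any realization of the shocks Z) *)
  (forall t, Ret t.+1 = mu + Z t.+1) ->
  Sig 0%N = Sig0 ->
  (forall t, Sig t.+1 = C *m C^T + A *m Sig t *m A^T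
                         + B *m Z t.+1 *m (Z t.+1)^T *m B^T) ->
  Sp 0%N = S0 ->
  (forall t i, Sp t.+1 i 0 = h (Sp t i 0) (Ret t.+1 i 0)) ->
  0 < gamma -> 0 < eps ->
  (* (i) C has full rank *)
  \rank C = n ->
  (* (ii) h bounded, and bounded below by s_low > 0 *)
  has_ubound (range (fun p : R * R => `|h p.1 p.2|)) ->
  0 < s_low -> (forall s r, s_low <= h s r) ->
  (* (iii) 1 <= q <= chi *)
  (forall s p, 1 <= q s p <= chi) ->
  forall t : nat,
    ((0 < t)%N \/ (forall i, s_low <= S0 i 0 <= supnorm2 h)) ->
    let Psi := diag_cV (Sp t) in
    let P := Psi *m Sig t *m Psi in
    let qt := q (Sp t) P in
    let Pt := (gamma / (eps * qt)) *: P in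
    opnorm ((eps * qt)^-1 *: invmx Psi) <= 1 / (eps * s_low) /\
    opnorm (invmx (1%:M + Pt *m invmx Psi) *m P)
      <= eps / gamma * chi * supnorm2 h.
Proof.
(* The returns enter only through the uniform bounds on [h]. *)
move=> _ Sig0_pd _ _ Sig_0 SigS Sp_0 SpS gamma_gt0 eps_gt0 _ h_bd s_low_gt0 h_ge
  q_bd t Sp_t_bd.
rewrite -Sp_0 in Sp_t_bd.
have Sp_bd := price_bounds h_bd h_ge SpS Sp_t_bd.
have Sp_gt0 i : 0 < Sp t i 0.
  by case/andP: (Sp_bd i) => /(lt_le_trans s_low_gt0).
have psdSig : psd (Sig t).
  by apply: (@covariance_psd _ _ A B C Z) => //; rewrite Sig_0; apply: pd_psd.
move=> Psi P qt Pt.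
have psdP : psd P by rewrite /P -[X in _ *m X]tr_diag_mx; apply: psd_congr.
have /andP[qt_ge1 qt_le] := q_bd (Sp t) P; rewrite -/qt in qt_ge1 qt_le.
have qt_gt0 : 0 < qt by apply: lt_le_trans qt_ge1.
split.
  apply: le_trans (opnorm_scale_invmx_diag_le _ _ _ n_ge1 _ s_low_gt0 _) _.
  - by rewrite invr_ge0 mulr_ge0 ?ltW.
  - by move=> i; case/andP: (Sp_bd i).
  rewrite div1r [X in _ <= X]invfM ler_wpM2r ?invr_ge0 ?(ltW s_low_gt0) //.
  by rewrite lef_pV2 ?posrE ?mulr_gt0 // ler_peMr // ltW.
apply: le_trans (opnorm_resolvent_le psdP Sp_gt0 (supnorm2 h) n_ge1 _ _) _.
- by rewrite divr_gt0 ?mulr_gt0.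
- by move=> i; case/andP: (Sp_bd i).
have H_ge0 := le_trans (normr_ge0 _) (abs_le_supnorm2 0 0 h_bd).
rewrite invf_div mulrC ler_wpM2r // mulrAC ler_wpM2l //.
by rewrite divr_ge0 // ltW.
Qed.
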